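(* Let $M$ be a simple $L$-module such that (i) for some $m\ge 1$, either $d^m$ or $u^m$ acts on $M$ as a scalar, and (ii) $M$ contains a weight vector. Then $M$ is finite-dimensional.
   Context: Let $r,s,\gamma\in\mathbb C$ with $rs\neq 0$ and $\phi\in\mathbb C[x]$. The generalized down-up algebra $L=L(\phi,r,s,\gamma)$ is the associative $\mathbb C$-algebra generated by $u,d,h$ subject to $hu-ruh=\gamma u$, $dh-rhd=\gamma d$, $du-sud=\phi(h)$. Modules are left modules. A weight vector of an $L$-module $M$ is a nonzero $v\in M$ with $hv=\lambda v$ and $(ud)v=\beta v$ for some $(\lambda,\beta)\in\mathbb C^2$. *)

From HB Require Import structures.
From mathcomp Require Import all_boot all_order all_algebra.
Set Implicit Arguments. Unset Strict Implicit. Unset Printing Implicit Defensive.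
Import GRing.Theory Num.Theory.
Local Open Scope ring_scope.

Section LModules.
Variables (F : fieldType) (V : lmodType F).

Definition phi_act (phi : {poly F}) (H : V -> V) (v : V) : V :=
  \sum_(i < size phi) phi`_i *: iter i H v.

(* V with endomorphisms U (for u), D (for d), H (for h) is a module over
   L(phi, r, s, gamma) *)
Definition is_Lmodule (r s g : F) (phi : {poly F}) (U D H : {linear V -> V}) :=
  forall v : V,
  [/\ H (U v) - r *: U (H v) = g *: U v,
      D (H v) - r *: H (D v) = g *: D v &
      D (U v) - s *: U (D v) = phi_act phi H v].

Definition is_submodule (U D H : {linear V -> V}) (P : V -> Prop) :=
  [/\ P 0,
      (forall (a : F) x y, P x -> P y -> P (a *: x + y)) &
      (forall x, P x -> [/\ P (U x), P (D x) & P (H x)])].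

Definition simple_module (U D H : {linear V -> V}) :=
  (exists v : V, v != 0) /\
  forall P : V -> Prop, is_submodule U D H P ->
    (forall x, P x -> x = 0) \/ (forall x, P x).

Definition weight_vector (U D H : {linear V -> V}) (v : V) :=
  v != 0 /\ exists lam beta : F, H v = lam *: v /\ U (D v) = beta *: v.

Definition finite_dim :=
  exists (n : nat) (e : 'I_n -> V),
    forall v : V, exists c : 'I_n -> F, v = \sum_(i < n) c i *: e i.

End LModules.

(* Call a vector a full weight vector if it is an eigenvector of h, ud and du.
   The defining relations show that u and d map full weight vectors to full
   weight vectors, shifting the h-eigenvalue.  Let {A, B} = {u, d}; then BA acts
   as a scalar on each full weight vector, so for a full weight vector w with
   B w in the span of the A^i w, that span is a submodule, hence all of M.
   If A^m = c with c != 0, any full weight w works (B w = c^-1 B A^m w) and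
   A^m w = c w bounds the dimension by m.  If B^m = 0, descend along B to a full
   weight w with B w = 0; since B^m A^m w = 0 some x = A^(k+1) w is killed by B,
   and either x = 0 or the span of the A^i x is M, which puts w in the span of
   the A^(i+k+1) w: in both cases the A^i w satisfy a linear recurrence. *)

From HB Require Import structures.
From mathcomp Require Import all_boot all_order all_algebra.
Import GRing.Theory Num.Theory.
Local Open Scope ring_scope.
Set Implicit Arguments. Unset Strict Implicit.

Section Spans.
Variables (F : fieldType) (V : lmodType F).

Lemma iter_linearZ (T : {linear V -> V}) n a x :
  iter n T (a *: x) = a *: iter n T x.
Proof. by elim: n => //= n ->; rewrite linearZZ. Qed.

Lemma iter_eigen (T : {linear V -> V}) mu x :
  T x = mu *: x -> forall n, iter n T x = mu ^+ n *: x.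
Proof.
move=> Tx; elim=> [|n IHn] /=; first by rewrite scale1r.
by rewrite IHn linearZZ Tx scalerA -exprSr.
Qed.

Lemma phi_act_eigen (phi : {poly F}) (T : {linear V -> V}) mu x :
  T x = mu *: x -> phi_act phi T x = phi.[mu] *: x.
Proof.
move=> Tx; rewrite /phi_act horner_coef scaler_suml; apply: eq_bigr => i _.
by rewrite (iter_eigen Tx) scalerA.
Qed.

Definition lin_closed (P : V -> Prop) :=
  P 0 /\ forall a x y, P x -> P y -> P (a *: x + y).

Lemma lin_closedZ P {a : F} {x : V} : lin_closed P -> P x -> P (a *: x).
Proof. by move=> [P0 PD] Px; rewrite -[_ *: x]addr0; apply: PD. Qed.

Lemma lin_closed_sum P (I : Type) (rs : seq I) (Q : pred I) (f : I -> V) :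
  lin_closed P -> (forall i, Q i -> P (f i)) -> P (\sum_(i <- rs | Q i) f i).
Proof.
move=> [P0 PD] Pf; apply: big_ind => // x y Px Py.
by rewrite -[x]scale1r; apply: PD.
Qed.

Definition spanN (e : nat -> V) N x :=
  exists c : nat -> F, x = \sum_(i < N) c i *: e i.

Definition span (e : nat -> V) x := exists N, spanN e N x.

Lemma spanN_lin_closed e N : lin_closed (spanN e N).
Proof.
split; first by exists (fun _ => 0); rewrite big1 // => i _; rewrite scale0r.
move=> a _ _ [c1 ->] [c2 ->]; exists (fun i => a * c1 i + c2 i).
rewrite scaler_sumr -big_split /=; apply: eq_bigr => i _.
by rewrite scalerDl scalerA.
Qed.

Lemma spanN_vec e N i : (i < N)%N -> spanN e N (e i).
Proof.
move=> ltiN; exists (fun j => (j == i)%:R).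
rewrite (bigD1 (Ordinal ltiN)) //= eqxx scale1r big1 ?addr0 // => j neji.
by rewrite -(inj_eq val_inj) /= in neji; rewrite (negPf neji) scale0r.
Qed.

Lemma spanN_widen e N M x : (N <= M)%N -> spanN e N x -> spanN e M x.
Proof.
move=> leNM [c ->]; exists (fun i => if (i < N)%N then c i else 0).
rewrite (big_ord_widen _ (fun i => c i *: e i) leNM) big_mkcond /=.
by apply: eq_bigr => i _; case: ifP => // _; rewrite scale0r.
Qed.

Lemma spanN_sub P e N :
  lin_closed P -> (forall i, (i < N)%N -> P (e i)) -> forall x, spanN e N x -> P x.
Proof.
move=> clP Pe _ [c ->]; apply: lin_closed_sum => // i _.
exact: lin_closedZ (Pe _ (ltn_ord i)).
Qed.

Lemma span_lin_closed e : lin_closed (span e).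
Proof.
split; first by exists 0%N; apply: (spanN_lin_closed e 0).1.
move=> a x y [N Nx] [M My]; exists (maxn N M).
apply: (spanN_lin_closed e _).2.
  exact: spanN_widen (leq_maxl N M) Nx.
exact: spanN_widen (leq_maxr N M) My.
Qed.

Lemma span_vec e i : span e (e i).
Proof. by exists i.+1; apply: spanN_vec. Qed.

Lemma span_linear (T : {linear V -> V}) e :
  (forall i, span e (T (e i))) -> forall x, span e x -> span e (T x).
Proof.
move=> Te x [N [c ->]]; rewrite linear_sum; apply: lin_closed_sum => [|i _].
  exact: span_lin_closed.
by rewrite linearZZ; apply: lin_closedZ (span_lin_closed e) (Te i).
Qed.

Lemma finite_dim_of_spanN e N :
  (forall x, span e x) -> (forall i, spanN e N (e i)) -> finite_dim V.
Proof.
move=> spanV eN; exists N, (fun i : 'I_N => e i) => v.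
have [M Mv] := spanV v.
have [c ->] := spanN_sub (spanN_lin_closed e N) (fun i _ => eN i) Mv.
by exists (fun i : 'I_N => c i).
Qed.

(* If e 0 is a combination of the e (i + K), the last e (n + K) with a nonzero
   coefficient is a combination of earlier terms. *)
Lemma spanN_last_of_span_shift e K :
  (0 < K)%N -> span (fun i => e (i + K)%N) (e 0%N) -> exists N, spanN e N (e N).
Proof.
move=> K_gt0 [n]; elim: n => [|n IHn] [f e0].
  by exists 0%N; rewrite e0 big_ord0; apply: (spanN_lin_closed e 0).1.
rewrite big_ord_recr /= in e0.
have [fn0|fn_neq0] := eqVneq (f n) 0.
  by apply: IHn; exists f; rewrite e0 fn0 scale0r addr0.
exists (n + K)%N.
have -> : e (n + K)%N =
    (f n)^-1 *: ((-1) *: (\sum_(i < n) f i *: e (i + K)%N) + e 0%N).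
  by rewrite e0 scaleN1r addKr scalerA mulVf // scale1r.
have clN := spanN_lin_closed e (n + K).
apply: (lin_closedZ clN); apply: clN.2.
  apply: lin_closed_sum => // i _; apply: (lin_closedZ clN); apply: spanN_vec.
  by rewrite ltn_add2r.
by apply: spanN_vec; rewrite addn_gt0 K_gt0 orbT.
Qed.

Definition iterates (T : {linear V -> V}) w i := iter i T w.

Lemma spanN_iterates (T : {linear V -> V}) w N :
  spanN (iterates T w) N (iter N T w) ->
  forall i, spanN (iterates T w) N (iter i T w).
Proof.
move=> TNw; have clN := spanN_lin_closed (iterates T w) N.
elim=> [|i [c Ti]].
  by case: N TNw {clN} => [//|N] _; apply: (spanN_vec (iterates T w) (ltn0Sn N)).
rewrite iterS Ti linear_sum; apply: lin_closed_sum => // j _.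
rewrite linearZZ; apply: lin_closedZ => //; rewrite /iterates -iterS.
have := ltn_ord j; rewrite leq_eqVlt => /predU1P [-> //|ltjN].
exact: spanN_vec.
Qed.

Lemma finite_dim_of_iterates (T : {linear V -> V}) w N :
  (forall x, span (iterates T w) x) -> spanN (iterates T w) N (iter N T w) ->
  finite_dim V.
Proof. by move=> spanV /spanN_iterates; apply: finite_dim_of_spanN. Qed.

End Spans.

Section WeightLadders.
Variables (F : fieldType) (r s g : F) (phi : {poly F})
  (V : lmodType F) (U D H : {linear V -> V}).
Hypotheses (r_neq0 : r != 0) (s_neq0 : s != 0)
  (LmodV : is_Lmodule r s g phi U D H) (simpleV : simple_module U D H).

Definition full_weight (x : V) :=
  [/\ exists l, H x = l *: x, exists b, U (D x) = b *: x
    & exists b, D (U x) = b *: x].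

Lemma full_weight_weight_vector v : weight_vector U D H v -> full_weight v.
Proof.
move=> [_ [l [b [Hv UDv]]]]; split; [by exists l | by exists b |].
have [_ _ /eqP] := LmodV v; rewrite (phi_act_eigen phi Hv) UDv scalerA subr_eq.
by move=> /eqP ->; exists (phi.[l] + s * b); rewrite scalerDl.
Qed.

Lemma full_weightU x : full_weight x -> full_weight (U x).
Proof.
move=> [[l Hx] _ [b DUx]].
have HUx : H (U x) = (g + r * l) *: U x.
  have [+ _ _] := LmodV x; move/eqP; rewrite subr_eq => /eqP ->.
  by rewrite Hx linearZZ scalerA scalerDl.
split; [by exists (g + r * l) | by exists b; rewrite DUx linearZZ |].
have [_ _ /eqP] := LmodV (U x).
rewrite (phi_act_eigen phi HUx) DUx (linearZZ U) scalerA subr_eq => /eqP ->.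
by exists (phi.[g + r * l] + s * b); rewrite scalerDl.
Qed.

Lemma full_weightD x : full_weight x -> full_weight (D x).
Proof.
move=> [[l Hx] [b UDx] _].
have HDx : H (D x) = (r^-1 * (l - g)) *: D x.
  apply: (scalerI r_neq0); rewrite scalerA mulrA mulfV // mul1r scalerBl.
  by have [_ <- _] := LmodV x; rewrite Hx linearZZ opprB addrC subrK.
split; [by exists (r^-1 * (l - g)) | | by exists b; rewrite UDx linearZZ].
exists (s^-1 * (b - phi.[r^-1 * (l - g)])).
apply: (scalerI s_neq0); rewrite scalerA mulrA mulfV // mul1r scalerBl.
have [_ _] := LmodV (D x); rewrite (phi_act_eigen phi HDx) UDx (linearZZ D) => <-.
by rewrite opprB addrC subrK.
Qed.

Section Ladder.
Variables A B : {linear V -> V}.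
Hypothesis AB_UD : (A = U /\ B = D) \/ (A = D /\ B = U).

Lemma full_weightA x : full_weight x -> full_weight (A x).
Proof. by case: AB_UD => -[-> _]; [apply: full_weightU | apply: full_weightD]. Qed.

Lemma full_weightB x : full_weight x -> full_weight (B x).
Proof. by case: AB_UD => -[_ ->]; [apply: full_weightD | apply: full_weightU]. Qed.

Lemma full_weightBA x : full_weight x -> exists b, B (A x) = b *: x.
Proof. by case: AB_UD => -[-> ->] []. Qed.

Lemma full_weight_iter w : full_weight w -> forall i, full_weight (iter i A w).
Proof. by move=> ww; elim=> //= i; apply: full_weightA. Qed.

Lemma span_iterates_submodule w :
  full_weight w -> span (iterates A w) (B w) ->
  is_submodule U D H (span (iterates A w)).
Proof.
move=> ww Bw; set P := span (iterates A w).
have clP : lin_closed P := span_lin_closed _.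
have PA : forall x, P x -> P (A x).
  by apply: span_linear => i; rewrite /iterates -iterS; apply: span_vec.
have PB : forall x, P x -> P (B x).
  apply: span_linear => -[//|i]; rewrite /iterates iterS.
  have [b ->] := full_weightBA (full_weight_iter ww i).
  exact: lin_closedZ clP (span_vec _ _).
have PH : forall x, P x -> P (H x).
  apply: span_linear => i; have [[l ->] _ _] := full_weight_iter ww i.
  exact: lin_closedZ clP (span_vec _ _).
split; [exact: clP.1 | exact: clP.2 |] => x Px.
by case: AB_UD => -[<- <-]; split; auto.
Qed.

Lemma span_iterates_full w :
  full_weight w -> w != 0 -> span (iterates A w) (B w) ->
  forall x, span (iterates A w) x.
Proof.
move=> ww w_neq0 Bw; have [P0|//] := simpleV.2 _ (span_iterates_submodule ww Bw).
by rewrite (P0 w (span_vec _ 0)) eqxx in w_neq0.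
Qed.

Lemma finite_dim_iter_scalar_unit m c w :
  (0 < m)%N -> c != 0 -> (forall x, iter m A x = c *: x) ->
  full_weight w -> w != 0 -> finite_dim V.
Proof.
case: m => [//|m] _ c_neq0 Am ww w_neq0.
have clS := span_lin_closed (iterates A w).
have Bw : span (iterates A w) (B w).
  have wE : w = c^-1 *: iter m.+1 A w by rewrite Am scalerA mulVf // scale1r.
  rewrite {2}wE linearZZ iterS; have [b ->] := full_weightBA (full_weight_iter ww m).
  by do 2 apply: (lin_closedZ clS); apply: (span_vec _ m).
apply: (finite_dim_of_iterates (N := m.+1)).
  exact: span_iterates_full ww w_neq0 Bw.
rewrite Am; exact: lin_closedZ (spanN_lin_closed _ _) (spanN_vec _ (ltn0Sn m)).
Qed.

Lemma exists_lowest_weight j x :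
  full_weight x -> x != 0 -> iter j B x = 0 ->
  exists w, [/\ full_weight w, w != 0 & B w = 0].
Proof.
elim: j x => [|j IHj] x wx x_neq0; first by move=> /= x0; rewrite x0 eqxx in x_neq0.
have [Bx0|Bx_neq0] := eqVneq (B x) 0; first by exists x.
by rewrite iterSr; apply: IHj => //; apply: full_weightB.
Qed.

Lemma exists_iterates_killed w j :
  full_weight w -> w != 0 -> iter j B (iter j A w) = 0 ->
  exists k, B (iter k.+1 A w) = 0.
Proof.
move=> ww w_neq0; elim: j => [|j IHj]; first by move=> /= w0; rewrite w0 eqxx in w_neq0.
rewrite iterSr iterS; have [b BAj] := full_weightBA (full_weight_iter ww j).
rewrite BAj iter_linearZ => /eqP; rewrite scaler_eq0 => /orP [/eqP b0|/eqP //].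
by exists j; rewrite iterS BAj b0 scale0r.
Qed.

Lemma finite_dim_iter_nilpotent m v :
  (forall x, iter m B x = 0) -> full_weight v -> v != 0 -> finite_dim V.
Proof.
move=> Bm wv v_neq0.
have [w [ww w_neq0 Bw0]] := exists_lowest_weight wv v_neq0 (Bm v).
have spanV : forall x, span (iterates A w) x.
  by apply: span_iterates_full => //; rewrite Bw0; apply: (span_lin_closed _).1.
have [k Bx0] := exists_iterates_killed ww w_neq0 (Bm (iter m A w)).
have [N wN] : exists N, spanN (iterates A w) N (iter N A w).
  have [x0|x_neq0] := eqVneq (iter k.+1 A w) 0.
    by exists k.+1; rewrite x0; apply: (spanN_lin_closed _ _).1.
  have Bx : span (iterates A (iter k.+1 A w)) (B (iter k.+1 A w)).
    by rewrite Bx0; apply: (span_lin_closed _).1.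
  have [n [f wE]] := span_iterates_full (full_weight_iter ww k.+1) x_neq0 Bx w.
  apply: (spanN_last_of_span_shift (e := iterates A w) (ltn0Sn k)).
  exists n, f; rewrite /iterates /= {1}wE.
  by apply: eq_bigr => i _; rewrite iterD.
exact: finite_dim_of_iterates spanV wN.
Qed.

End Ladder.

Lemma finite_dim_of_iter_scalar T m c v :
  T = U \/ T = D -> (0 < m)%N -> (forall x, iter m T x = c *: x) ->
  weight_vector U D H v -> finite_dim V.
Proof.
move=> TUD m_gt0 Tm vv; have wv := full_weight_weight_vector vv.
have v_neq0 : v != 0 := vv.1.
have [c0|c_neq0] := eqVneq c 0.
  have Tm0 x : iter m T x = 0 by rewrite Tm c0 scale0r.
  case: TUD => eT; subst T.
    exact: (@finite_dim_iter_nilpotent D U (or_intror (conj erefl erefl))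
      m v Tm0 wv v_neq0).
  exact: (@finite_dim_iter_nilpotent U D (or_introl (conj erefl erefl))
    m v Tm0 wv v_neq0).
case: TUD => eT; subst T.
  exact: (@finite_dim_iter_scalar_unit U D (or_introl (conj erefl erefl)) m c v
    m_gt0 c_neq0 Tm wv v_neq0).
exact: (@finite_dim_iter_scalar_unit D U (or_intror (conj erefl erefl)) m c v
  m_gt0 c_neq0 Tm wv v_neq0).
Qed.

End WeightLadders.

Unset Implicit Arguments. Set Strict Implicit.

Theorem mainTheorem3 (F : numClosedFieldType) (r s g : F) (phi : {poly F})
  (V : lmodType F) (U D H : {linear V -> V}) :
  r != 0 -> s != 0 ->
  is_Lmodule r s g phi U D H ->
  simple_module U D H ->
  (exists m : nat, (1 <= m)%N /\ exists c : F,
      (forall v : V, iter m D v = c *: v) \/ (forall v : V, iter m U v = c *: v)) ->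
  (exists v : V, weight_vector U D H v) ->
  finite_dim V.
Proof.
move=> r_neq0 s_neq0 LmodV simpleV [m [m_gt0 [c [Dm|Um]]]] [v vv].
  exact: (finite_dim_of_iter_scalar r_neq0 s_neq0 LmodV simpleV
            (or_intror erefl) m_gt0 Dm vv).
exact: (finite_dim_of_iter_scalar r_neq0 s_neq0 LmodV simpleV
          (or_introl erefl) m_gt0 Um vv).
Qed.
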